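(* Let $\Phi\colon\mathcal{M}(2;\mathbb{C})\to\mathcal{M}(2;\mathbb{C})$ be a polynomial automorphism compatible with conjugation. Then the discriminant hypersurface $\Delta=\{\mathrm{M}\in\mathcal{M}(2;\mathbb{C}):4\det\mathrm{M}-(\mathrm{tr}\,\mathrm{M})^2=0\}$ is invariant by $\Phi$; consequently the conic $v=u^2/4$ is invariant by $\mathrm{Sq}\,\Phi$.
   Context: $\mathrm{Inv}\colon\mathcal{M}(2;\mathbb{C})\to\mathbb{C}^2$, $\mathrm{M}\mapsto(\mathrm{tr}\,\mathrm{M},\det\mathrm{M})$. For $\Phi$ compatible with conjugation (i.e. $\mathrm{A}\Phi(\mathrm{M})\mathrm{A}^{-1}=\Phi(\mathrm{A}\mathrm{M}\mathrm{A}^{-1})$ for all $\mathrm{A}\in\mathrm{GL}(2;\mathbb{C})$), $\mathrm{Sq}\,\Phi\colon\mathbb{C}^2\dashrightarrow\mathbb{C}^2$ is the rational map, in coordinates $(u,v)$, with $\mathrm{Inv}\circ\Phi=\mathrm{Sq}\,\Phi\circ\mathrm{Inv}$. *)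

From HB Require Import structures.
From mathcomp Require Import all_boot all_order all_algebra.
From mathcomp Require Import complex.
From mathcomp Require Import Rstruct.
From mathcomp Require Import mpoly.
Set Implicit Arguments. Unset Strict Implicit. Unset Printing Implicit Defensive.
Import Order.TTheory GRing.Theory Num.Theory.
Local Open Scope ring_scope.
Local Open Scope complex_scope.

Definition CC : Type := (Rdefinitions.R)[i].
Definition Mat2 : Type := 'M[CC]_2.

Definition mx_coords (M : Mat2) : 'I_4 -> CC :=
  fun k => M (inord (k %/ 2)) (inord (k %% 2)).

Definition polynomial_map (Phi : Mat2 -> Mat2) : Prop :=
  exists P : 'I_2 -> 'I_2 -> {mpoly CC[4]},
    forall M i j, Phi M i j = (P i j).@[mx_coords M].

Definition polynomial_automorphism (Phi : Mat2 -> Mat2) : Prop :=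
  polynomial_map Phi /\
  exists Psi : Mat2 -> Mat2,
    [/\ polynomial_map Psi, cancel Phi Psi & cancel Psi Phi].

Definition compatible_with_conjugation (Phi : Mat2 -> Mat2) : Prop :=
  forall A : Mat2, A \in unitmx ->
    forall M : Mat2, A *m Phi M *m invmx A = Phi (A *m M *m invmx A).

Definition Inv (M : Mat2) : CC * CC := (\tr M, \det M).

Definition in_Delta (M : Mat2) : Prop := 4 * \det M - (\tr M) ^+ 2 = 0.

Definition in_conic (p : CC * CC) : Prop := p.2 = p.1 ^+ 2 / 4.

From HB Require Import structures.
From mathcomp Require Import all_boot all_order all_algebra.
From mathcomp Require Import complex Rstruct mpoly.
From mathcomp Require Import ring.

Set Implicit Arguments.
Unset Strict Implicit.
Unset Printing Implicit Defensive.
Import Order.TTheory GRing.Theory Num.Theory.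
Local Open Scope ring_scope.

(* A 2x2 matrix M lies on Delta iff it commutes with a nonzero nilpotent N
   (take N = M - (tr M / 2) I, or any nilpotent if M is scalar).  Then
   A = 1 + N is invertible and commutes with M, so compatibility with
   conjugation by A gives A Phi(M) A^-1 = Phi(M): Phi(M) commutes with A,
   hence with N, hence lies on Delta.  The inverse automorphism is again
   compatible with conjugation, so Phi(Delta) = Delta.  Since Inv maps Delta
   onto the conic v = u^2/4, with scalar matrices as a section, the conic is
   invariant by Sq Phi. *)

Section Matrix2.
Variable R : comPzRingType.
Implicit Types X N : 'M[R]_2.

Definition disc2 X : R := 4 * \det X - \tr X ^+ 2.

Lemma det2 X : \det X = X 0 0 * X 1 1 - X 0 1 * X 1 0.
Proof.
rewrite (expand_det_row _ 0) !big_ord_recl big_ord0 /cofactor !det_mx11 /= !mxE.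
have -> : lift 0 (0 : 'I_1) = 1 :> 'I_2 by apply/val_inj.
have -> : lift 1 (0 : 'I_1) = 0 :> 'I_2 by apply/val_inj.
by rewrite /bump /= expr0 expr1 mul1r addr0 mulN1r mulrN.
Qed.

Lemma tr2 X : \tr X = X 0 0 + X 1 1.
Proof.
rewrite /mxtrace !big_ord_recl big_ord0 addr0.
by have -> : lift ord0 (ord0 : 'I_1) = 1 :> 'I_2 by apply/val_inj.
Qed.

Lemma ord2P (i : 'I_2) : i = 0 \/ i = 1.
Proof. by case: i => [[|[|//]] ?]; [left | right]; apply/val_inj. Qed.

Lemma mulmx2E X N i j : (X *m N) i j = X i 0 * N 0 j + X i 1 * N 1 j.
Proof.
rewrite mxE !big_ord_recl big_ord0 addr0.
by have -> : lift ord0 (ord0 : 'I_1) = 1 :> 'I_2 by apply/val_inj.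
Qed.

Lemma det1Dmx2 N : \det (1%:M + N) = 1 + \tr N + \det N.
Proof. by rewrite !det2 tr2 !mxE /= !mulr1n !mulr0n !add0r; ring. Qed.

Lemma disc2_tr X : disc2 X^T = disc2 X.
Proof. by rewrite /disc2 det_tr mxtrace_tr. Qed.

Lemma disc2_mul_sqr_offdiag X N :
  X *m N = N *m X -> \tr N = 0 -> \det N = 0 -> disc2 X * N 0 1 ^+ 2 = 0.
Proof.
move=> cXN; rewrite tr2 det2 => /addr0_eq trN detN.
have /eqP := congr1 (fun A : 'M[R]_2 => A 0 0) cXN; rewrite !mulmx2E -subr_eq0 => /eqP c00.
have /eqP := congr1 (fun A : 'M[R]_2 => A 0 1) cXN; rewrite !mulmx2E -subr_eq0 => /eqP c01.
rewrite -trN in c01 detN.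
rewrite /disc2 det2 tr2.
move: c00 c01 detN.
set x := X 0 0; set y := X 0 1; set z := X 1 0; set w := X 1 1.
set p := N 0 0; set q := N 0 1; set r := N 1 0 => c00 c01 detN.
(* With s = -p, the commutator entries and det N generate disc2 X * q^2. *)
have -> : (4 * (x * w - y * z) - (x + w) ^+ 2) * q ^+ 2
    = 4 * q * y * (x * p + y * r - (p * x + q * z))
      + 4 * y ^+ 2 * (p * - p - q * r)
      - (x * q + y * - p - (p * y + q * w)) * (q * (x - w) + 2 * p * y).
  by ring.
by rewrite c00 c01 detN; ring.
Qed.

End Matrix2.

Lemma commute_nilpotent_disc2_eq0 (R : idomainType) (X N : 'M[R]_2) :
  X *m N = N *m X -> N != 0 -> \tr N = 0 -> \det N = 0 -> disc2 X = 0.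
Proof.
move=> cXN nzN trN detN.
have offdiag01 := disc2_mul_sqr_offdiag cXN trN detN.
have offdiag10 : disc2 X * N 1 0 ^+ 2 = 0.
  have cXNt : X^T *m N^T = N^T *m X^T by rewrite -!trmx_mul cXN.
  have := disc2_mul_sqr_offdiag cXNt; rewrite mxtrace_tr det_tr disc2_tr mxE.
  exact.
have [q0|/expf_neq0 q_nz] := eqVneq (N 0 1) 0; last first.
  by apply/eqP; move/eqP: offdiag01; rewrite mulf_eq0 (negPf (q_nz 2)) orbF.
have [r0|/expf_neq0 r_nz] := eqVneq (N 1 0) 0; last first.
  by apply/eqP; move/eqP: offdiag10; rewrite mulf_eq0 (negPf (r_nz 2)) orbF.
move: trN detN; rewrite tr2 det2 q0 r0 mul0r subr0 => /addr0_eq s_eq /eqP.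
rewrite -s_eq mulrN oppr_eq0 mulf_eq0 orbb => /eqP p0.
case/eqP: nzN; apply/matrixP => i j; rewrite mxE.
by case: (ord2P i) => ->; case: (ord2P j) => ->; rewrite -?s_eq ?(p0, oppr0, q0, r0).
Qed.

Section TwoInvertible.
Variables (F : fieldType) (two_neq0 : (2 : F) != 0).

Lemma disc2_eq0_commute_nilpotent (M : 'M[F]_2) : disc2 M = 0 ->
  exists N : 'M[F]_2, [/\ N != 0, \tr N = 0, \det N = 0 & M *m N = N *m M].
Proof.
move=> discM.
set N := M - (\tr M / 2)%:M.
have [N0|nzN] := eqVneq N 0.
  have -> : M = (\tr M / 2)%:M by apply/eqP; rewrite -subr_eq0 -/N N0.
  exists (delta_mx 0 1); split; last by rewrite scalar_mxC.
  - by apply/eqP => /matrixP/(_ 0 1)/eqP; rewrite !mxE /= oner_eq0.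
  - by rewrite tr2 !mxE /= addr0.
  - by rewrite det2 !mxE /= mul0r mulr0 subr0.
exists N; split => //; last by rewrite mulmxBr mulmxBl scalar_mxC.
- by rewrite tr2 !mxE /= !mulr1n tr2; field.
- have four_neq0 : (4 : F) != 0 by rewrite (_ : 4 = 2 * 2) ?mulf_neq0 //; ring.
  apply: (mulIf four_neq0); rewrite mul0r -discM /disc2.
  by rewrite !det2 !tr2 !mxE /= !mulr1n !mulr0n !subr0 tr2; field.
Qed.

Variable Phi : 'M[F]_2 -> 'M[F]_2.
Hypothesis Phi_conj : forall A : 'M[F]_2, A \in unitmx ->
  forall M, A *m Phi M *m invmx A = Phi (A *m M *m invmx A).

Lemma conj_compatible_commute (A M : 'M[F]_2) :
  A \in unitmx -> A *m M = M *m A -> A *m Phi M = Phi M *m A.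
Proof.
move=> Au cAM; have := Phi_conj Au M.
rewrite cAM -[M *m A *m _]mulmxA mulmxV // mulmx1 => PhiM_eq.
by rewrite -{2}PhiM_eq mulmxKV.
Qed.

Lemma conj_compatible_disc2_eq0 (M : 'M[F]_2) :
  disc2 M = 0 -> disc2 (Phi M) = 0.
Proof.
move=> /disc2_eq0_commute_nilpotent [N [nzN trN detN cMN]].
have Au : 1%:M + N \in unitmx by rewrite unitmxE det1Dmx2 trN detN !addr0 unitr1.
have cAM : (1%:M + N) *m M = M *m (1%:M + N).
  by rewrite mulmxDl mulmxDr mul1mx mulmx1 cMN.
apply: (commute_nilpotent_disc2_eq0 _ nzN trN detN).
move: (conj_compatible_commute Au cAM).
by rewrite mulmxDl mulmxDr mul1mx mulmx1 => /addrI.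
Qed.

End TwoInvertible.

Lemma compatible_with_conjugation_inverse (Phi Psi : Mat2 -> Mat2) :
  compatible_with_conjugation Phi -> cancel Phi Psi -> cancel Psi Phi ->
  compatible_with_conjugation Psi.
Proof.
move=> Phi_conj PhiK PsiK A Au M; apply: (can_inj PhiK).
by rewrite -Phi_conj // !PsiK.
Qed.

Lemma in_Delta_conic (M : Mat2) : in_Delta M <-> in_conic (Inv M).
Proof.
rewrite /in_Delta /in_conic /=; split => [DeltaM | ->]; last by field.
have -> : \det M = (4 * \det M - \tr M ^+ 2 + \tr M ^+ 2) / 4 by field.
by rewrite DeltaM add0r.
Qed.

Lemma Inv_scalar (u : CC) : Inv ((u / 2)%:M : Mat2) = (u, u ^+ 2 / 4).
Proof. by rewrite /Inv mxtrace_scalar det_scalar; congr pair; field. Qed.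

Theorem proposition2p25 (Phi : Mat2 -> Mat2) :
  polynomial_automorphism Phi ->
  compatible_with_conjugation Phi ->
  ((forall M : Mat2, in_Delta M -> in_Delta (Phi M)) /\
   (forall N : Mat2, in_Delta N -> exists2 M : Mat2, in_Delta M & Phi M = N)) /\
  (forall SqPhi : CC * CC -> CC * CC,
     (forall M : Mat2, Inv (Phi M) = SqPhi (Inv M)) ->
     (forall p : CC * CC, in_conic p -> in_conic (SqPhi p)) /\
     (forall q : CC * CC, in_conic q -> exists2 p : CC * CC, in_conic p & SqPhi p = q)).
Proof.
move=> [_ [Psi [_ PhiK PsiK]]] Phi_conj.
have two_neq0 : (2 : CC) != 0 by rewrite pnatr_eq0.
have Psi_conj := compatible_with_conjugation_inverse Phi_conj PhiK PsiK.
have Phi_Delta M : in_Delta M -> in_Delta (Phi M) :=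
  conj_compatible_disc2_eq0 two_neq0 Phi_conj (M := M).
have Delta_Phi N : in_Delta N -> exists2 M, in_Delta M & Phi M = N.
  move=> DeltaN; exists (Psi N); last exact: PsiK.
  exact: (conj_compatible_disc2_eq0 two_neq0 Psi_conj DeltaN).
split=> [// | SqPhi SqPhiE]; split=> -[u v]; rewrite {1}/in_conic /= => ->.
  rewrite -Inv_scalar -SqPhiE; apply/in_Delta_conic/Phi_Delta/in_Delta_conic.
  by rewrite Inv_scalar.
have [|M DeltaM PhiM] := Delta_Phi ((u / 2)%:M).
  by apply/in_Delta_conic; rewrite Inv_scalar.
by exists (Inv M); [exact/in_Delta_conic | rewrite -SqPhiE PhiM Inv_scalar].
Qed.
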